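(* Let $N\ge 2$, $K\ge 2$ be integers, and let $R_{\mathrm{F}}(M)$, $r_{\mathrm{C}}(M,N,K)$, $r_{\mathrm{D}}(M,N,K)$ be as in the context. (1) If $N>K$ and $(N,K)\neq(3,2)$, then $\dfrac{R_{\mathrm{F}}(M)}{r_{\mathrm{C}}(M,N,K)}\le 2$ for all $1\le M\le N$. (2) If $N\le K$, then $\dfrac{R_{\mathrm{F}}(M)}{r_{\mathrm{D}}(M,N,K)}\le e$ for all $1\le M\le N$.
   Context: Binomial convention: $\binom{n}{m}=0$ if $m>n$. $R_{\mathrm{F}}(M)$, $M\in[0,N]$, is the lower convex envelope of the points $\{(0,N)\}\cup\{(M_t,R_t):t\in\{0,\ldots,K\}\}$ with $M_t=1+\frac{t(N-1)}{K}$ and $R_t=\frac{\binom{K}{t+1}-\binom{K-\min\{N-1,K\}}{t+1}}{\binom{K}{t}}$. For positive integers $N',K$, $r_{\mathrm{C}}(M,N',K)$, $M\in[0,N']$, is the lower convex envelope of the points $\left(\frac{tN'}{K},\ \frac{\binom{K}{t+1}-\binom{K-\min\{N',K\}}{t+1}}{\binom{K}{t}}\right)$, $t\in\{0,\ldots,K\}$; and $r_{\mathrm{D}}(M,N',K):=\frac{N'-M}{M}\left(1-\left(1-\frac{M}{N'}\right)^{\min\{N',K\}}\right)$ for $M\in(0,N']$. Ratios at points where the denominator vanishes (at $M=N$) are to be read as the corresponding inequality $R_{\mathrm{F}}(M)\le c\cdot(\text{denominator})$. *)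

From HB Require Import structures.
From mathcomp Require Import all_boot all_order all_algebra.
From mathcomp Require Import all_classical all_reals all_analysis.
Set Implicit Arguments. Unset Strict Implicit. Unset Printing Implicit Defensive.
Import Order.TTheory GRing.Theory Num.Theory.
Local Open Scope ring_scope.
Local Open Scope classical_set_scope.

(* Lower convex envelope of the finite point set s (list of (x,y) points),
   evaluated at abscissa M: infimum of the y-values of all convex
   combinations of the points whose x-value is M. *)
Definition lce {R : realType} (s : seq (R * R)) (M : R) : R :=
  inf [set z : R | exists l : 'I_(size s) -> R,
        (forall i, 0 <= l i) /\ \sum_i l i = 1 /\
        \sum_i l i * (nth (0, 0) s i).1 = M /\
        z = \sum_i l i * (nth (0, 0) s i).2].

Definition Rval {R : realType} (m K t : nat) : R :=
  ('C(K, t.+1)%:R - 'C(K - minn m K, t.+1)%:R) / 'C(K, t)%:R.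

Definition RF {R : realType} (N K : nat) (M : R) : R :=
  lce ((0, N%:R) ::
       [seq (1 + t%:R * (N%:R - 1) / K%:R, Rval (N - 1) K t) | t <- iota 0 K.+1])
      M.

Definition rC {R : realType} (M : R) (N' K : nat) : R :=
  lce [seq (t%:R * N'%:R / K%:R, Rval N' K t) | t <- iota 0 K.+1] M.

Definition rD {R : realType} (M : R) (N' K : nat) : R :=
  (N'%:R - M) / M * (1 - (1 - M / N'%:R) ^+ minn N' K).

From HB Require Import structures.
From mathcomp Require Import all_boot all_order all_algebra.
From mathcomp Require Import all_classical all_reals all_analysis.
From mathcomp Require Import ring lra zify.
Import Order.TTheory GRing.Theory Num.Theory.
Set Implicit Arguments.
Unset Strict Implicit.
Unset Printing Implicit Defensive.
Local Open Scope ring_scope.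

(* R_F is bounded above by the chord of its defining points at the two
   consecutive abscissae x_s <= M <= x_(s+1), on which R_t = Rval (N-1) K t.

   (1) For K < N all values are (K-t)/(t+1), a convex sequence in t, so r_C lies
   above every secant through two consecutive points of its graph. The chord of
   R_F and twice such a secant are affine in M; comparing them at the ends of
   the pieces cut out by the break point (s+1)N/K of r_C gives the factor 2.
   When N = K + 1 and M <= 2 this comparison fails, and the chord from (0, N)
   to (x_1, R_1), skipping the point (x_0, R_0) = (1, K), is used instead.

   (2) For N <= K, the bounds R_t <= (N-1)(K-t)/K and R_t <= (K-t)/(t+1) show
   that the chord value Y satisfies Y <= N - M and Y (M-1) <= N - M, hence
   Y <= 8/3 (N-M)(M+4)/(M+2)^2. A second-order Bernoulli inequality gives
   (1 - M/N)^N (M+2)^2 <= 4, which turns this into Y <= 8/3 r_D <= e r_D. *)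

Section LowerConvexEnvelope.
Variable R : realType.
Implicit Types (s : seq (R * R)) (M : R).
Local Open Scope classical_set_scope.

Definition lce_set s M := [set z : R | exists l : 'I_(size s) -> R,
  (forall i, 0 <= l i) /\ \sum_i l i = 1 /\
  \sum_i l i * (nth (0, 0) s i).1 = M /\ z = \sum_i l i * (nth (0, 0) s i).2].

Lemma lceE s M : lce s M = inf (lce_set s M). Proof. by []. Qed.

Lemma sum_indicator n a (F : nat -> R) : (a < n)%N ->
  \sum_(i < n) (val i == a)%:R * F i = F a.
Proof.
move=> an; rewrite (eq_bigr (fun i : 'I_n => if val i == a then F i else 0)).
  by rewrite -big_mkcond big_ord1_eq an.
by move=> i _; case: eqP; rewrite ?mul1r ?mul0r.
Qed.

Lemma lce_set_ge_affine s M (al be : R) :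
  (forall i, (i < size s)%N -> al * (nth (0, 0) s i).1 + be <= (nth (0, 0) s i).2) ->
  forall z, lce_set s M z -> al * M + be <= z.
Proof.
move=> H z [l [l0 [l1 [lx ->]]]].
rewrite -lx -[be]mul1r -l1 mulr_sumr mulr_suml -big_split /=.
apply: ler_sum => i _.
by rewrite mulrCA -mulrDr; apply: ler_wpM2l => //; exact: H.
Qed.

Lemma lce_set_chord s a b (la : R) : (a < size s)%N -> (b < size s)%N ->
  0 <= la <= 1 ->
  lce_set s ((1 - la) * (nth (0, 0) s a).1 + la * (nth (0, 0) s b).1)
            ((1 - la) * (nth (0, 0) s a).2 + la * (nth (0, 0) s b).2).
Proof.
move=> Ha Hb /andP[la0 la1].
pose l (i : 'I_(size s)) := (1 - la) * (val i == a)%:R + la * (val i == b)%:R.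
have lE F : \sum_i l i * F (val i) = (1 - la) * F a + la * F b.
  under eq_bigr do rewrite mulrDl -!mulrA.
  by rewrite big_split -!mulr_sumr /= !sum_indicator.
exists l; split.
  by move=> i; apply: addr_ge0; apply: mulr_ge0; rewrite ?ler0n //; lra.
split; last by rewrite (lE (fun i => (nth (0, 0) s i).1)) (lE (fun i => (nth (0, 0) s i).2)).
by under eq_bigr do rewrite -[l _]mulr1; rewrite (lE (fun=> 1)); lra.
Qed.

Lemma lce_le_chord s a b (la : R) M : (a < size s)%N -> (b < size s)%N ->
  0 <= la <= 1 ->
  (1 - la) * (nth (0, 0) s a).1 + la * (nth (0, 0) s b).1 = M ->
  lce s M <= (1 - la) * (nth (0, 0) s a).2 + la * (nth (0, 0) s b).2.
Proof.
move=> Ha Hb hla <-; rewrite lceE; apply: ge_inf; last exact: lce_set_chord.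
set B := \sum_(i < size s) `|(nth (0, 0) s i).2|.
exists (- B) => z /(@lce_set_ge_affine _ _ 0 (- B)); rewrite mul0r add0r; apply.
move=> i Hi; rewrite mul0r add0r lerNl; apply: le_trans (ler_norm _) _.
by rewrite normrN /B (bigD1 (Ordinal Hi)) //= lerDl sumr_ge0.
Qed.

Lemma lce_ge_affine s a b (la : R) M (al be : R) :
  (a < size s)%N -> (b < size s)%N -> 0 <= la <= 1 ->
  (1 - la) * (nth (0, 0) s a).1 + la * (nth (0, 0) s b).1 = M ->
  (forall i, (i < size s)%N -> al * (nth (0, 0) s i).1 + be <= (nth (0, 0) s i).2) ->
  al * M + be <= lce s M.
Proof.
move=> Ha Hb hla HM H; rewrite lceE; apply: lb_le_inf; last exact: lce_set_ge_affine.
by eexists; rewrite -HM; apply: lce_set_chord.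
Qed.

End LowerConvexEnvelope.

Lemma exists_bracket (R : realDomainType) (x : nat -> R) K M :
  (0 < K)%N -> x 0%N <= M <= x K -> exists2 s, (s < K)%N & x s <= M <= x s.+1.
Proof.
elim: K => [//|K IH] _ /andP[h0 hK].
have [MK|KM] := leP M (x K); last by exists K => //; rewrite (ltW KM) hK.
case: K IH hK MK => [|K] IH hK MK; first by exists 0%N => //; rewrite h0.
have [|s sK hs] := IH isT; first by rewrite h0 MK.
by exists s => //; apply: ltnW.
Qed.

(* A (t+1)-subset of a K-set meeting a fixed m-subset contains one of its m
   points, and each point lies in C(K-1, t) of them. *)
Lemma bin_le_subn_add K t m : (m <= K)%N ->
  ('C(K, t.+1) <= 'C(K - m, t.+1) + m * 'C(K.-1, t))%N.
Proof.
elim: m => [|m IH] mK; first by rewrite subn0 mul0n addn0.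
have := IH (ltnW mK); rewrite (_ : K - m = (K - m.+1).+1)%N; last by lia.
have : ('C(K - m.+1, t) <= 'C(K.-1, t))%N by apply: leq_bin2l; lia.
rewrite binS mulSn; lia.
Qed.

Section Rval.
Variable R : realType.

Lemma binS_ratio K t : (t <= K)%N ->
  ('C(K, t.+1)%:R : R) = (K%:R - t%:R) / (t%:R + 1) * 'C(K, t)%:R.
Proof.
move=> tK; have /(congr1 (fun n => n%:R : R)) := mul_bin_left K t.
rewrite !natrM natrB // -(@natr1 R t) => E.
have t1 : (t%:R + 1 : R) != 0 by rewrite natr1 pnatr_eq0.
by apply: (mulfI t1); rewrite E; field.
Qed.

Lemma bin_gtR0 K t : (t <= K)%N -> (0 : R) < 'C(K, t)%:R.
Proof. by move=> tK; rewrite ltr0n bin_gt0. Qed.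

Lemma Rval_full m K t : (K <= m)%N -> (t <= K)%N ->
  Rval m K t = (K%:R - t%:R) / (t%:R + 1) :> R.
Proof.
move=> Km tK; rewrite /Rval (minn_idPr Km) subnn bin0n subr0 binS_ratio //.
by rewrite mulfK // gt_eqF // bin_gtR0.
Qed.

Lemma Rval_le_ratio m K t : (t <= K)%N ->
  Rval m K t <= (K%:R - t%:R) / (t%:R + 1) :> R.
Proof.
move=> tK; rewrite /Rval binS_ratio // mulrBl mulfK ?gt_eqF ?bin_gtR0 //.
by rewrite lerBlDr lerDl divr_ge0.
Qed.

Lemma Rval_le_linear m K t : (0 < K)%N -> (m <= K)%N -> (t <= K)%N ->
  Rval m K t <= m%:R * (K%:R - t%:R) / K%:R :> R.
Proof.
move=> K0 mK tK; rewrite /Rval (minn_idPl mK) ler_pdivrMr ?bin_gtR0 //.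
have Kn : (K%:R : R) != 0 by rewrite pnatr_eq0 -lt0n.
have bin_down : ('C(K.-1, t)%:R : R) = (K%:R - t%:R) * 'C(K, t)%:R / K%:R.
  by apply: (mulfI Kn); rewrite -natrB // -!natrM -mul_bin_down natrM; field.
rewrite (_ : _ * 'C(K, t)%:R = m%:R * 'C(K.-1, t)%:R); last by rewrite bin_down; field.
by rewrite -natrM lerBlDl -natrD ler_nat bin_le_subn_add.
Qed.

End Rval.

Section Affine.
Variable R : realFieldType.

Definition affine (g : R -> R) :=
  forall x y u, g ((1 - u) * x + u * y) = (1 - u) * g x + u * g y.

Lemma affine_ge0_between (g : R -> R) a b M : affine g ->
  a <= M <= b -> 0 <= g a -> 0 <= g b -> 0 <= g M.
Proof.
move=> gA /andP[aM Mb] ga gb.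
have [ab|] := ltP a b; last by move=> ba; have -> : M = a by lra.
have ba : b - a != 0 by apply/eqP; lra.
have -> : M = (1 - (M - a) / (b - a)) * a + (M - a) / (b - a) * b by field.
have u0 : 0 <= (M - a) / (b - a) by apply: divr_ge0; lra.
have u1 : (M - a) / (b - a) <= 1 by rewrite ler_pdivrMr ?mul1r; lra.
by rewrite gA; apply: addr_ge0; apply: mulr_ge0; lra.
Qed.

Lemma ler_convex_comb (l a b A B : R) : 0 <= l <= 1 -> a <= A -> b <= B ->
  (1 - l) * a + l * b <= (1 - l) * A + l * B.
Proof. by move=> /andP[l0 l1] aA bB; apply: lerD; apply: ler_wpM2l => //; lra. Qed.

End Affine.

Section RFChord.
Variable R : realType.

Definition RF_points N K : seq (R * R) := (0, N%:R) ::
  [seq (1 + t%:R * (N%:R - 1) / K%:R, Rval (N - 1) K t) | t <- iota 0 K.+1].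

Lemma size_RF_points N K : size (RF_points N K) = K.+2.
Proof. by rewrite /= size_map size_iota. Qed.

Lemma nth_RF_points N K t : (t <= K)%N ->
  nth (0, 0) (RF_points N K) t.+1 = (1 + t%:R * (N%:R - 1) / K%:R, Rval (N - 1) K t).
Proof.
move=> tK; rewrite -nth_behead (nth_map 0%N) ?size_iota //.
by rewrite nth_iota.
Qed.

Lemma RF_le_chord N K (M : R) : (2 <= N)%N -> (0 < K)%N -> 1 <= M <= N%:R ->
  exists s l, [/\ (s < K)%N, 0 <= l <= 1,
    M = 1 + (s%:R + l) * (N%:R - 1) / K%:R &
    RF N K M <= (1 - l) * Rval (N - 1) K s + l * Rval (N - 1) K s.+1].
Proof.
move=> N2 K0 /andP[M1 MN].
have n1 : (0 : R) < N%:R - 1 by rewrite subr_gt0 ltr1n.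
have kp : (0 : R) < K%:R by rewrite ltr0n.
pose x (t : nat) : R := 1 + t%:R * (N%:R - 1) / K%:R.
have [s sK /andP[xsM Mxs1]] : exists2 s, (s < K)%N & x s <= M <= x s.+1.
  apply: exists_bracket => //; rewrite /x mul0r mul0r addr0 M1 /=.
  by rewrite mulrAC divff ?gt_eqF // mul1r addrC subrK.
have xS : x s.+1 = x s + (N%:R - 1) / K%:R by rewrite /x -natr1; field; lra.
pose l := (M - x s) * K%:R / (N%:R - 1).
have Ml : M = 1 + (s%:R + l) * (N%:R - 1) / K%:R by rewrite /l /x; field; lra.
have l01 : 0 <= l <= 1.
  rewrite /l divr_ge0 ?mulr_ge0 /=; try lra.
  by rewrite ler_pdivrMr // mul1r -ler_pdivlMr //; lra.
exists s, l; split => //.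
have := @lce_le_chord R (RF_points N K) s.+1 s.+2 l M.
rewrite size_RF_points !nth_RF_points // 1?ltnW //=; apply => //.
by rewrite Ml -natr1; field; lra.
Qed.

End RFChord.

Section RDBound.
Variable R : realType.

Lemma expR1_ge_8_3 : (8 / 3 : R) <= expR 1.
Proof.
have -> : (8 / 3 : R) = series (exp_coeff 1) 4%N.
  rewrite /series /exp_coeff /= !big_nat_recr //= big_geq // !expr1n.
  by rewrite !factS fact0 /=; field.
have inc : nondecreasing_seq (series (exp_coeff (1 : R))).
  by apply: nondecreasing_series => n _ _; exact: exp_coeff_ge0.
exact: (nondecreasing_cvgn_le inc (is_cvg_series_exp_coeff 1) 4%N).
Qed.

Lemma bernoulli2 (y : R) n : 0 <= y ->
  2 + 2 * n%:R * y + n%:R * (n%:R - 1) * y ^+ 2 <= 2 * (1 + y) ^+ n.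
Proof.
move=> y0; elim: n => [|n IH]; first by rewrite expr0 mulr0 !mul0r !addr0 mulr1.
have nn : 0 <= n%:R * (n%:R - 1 : R).
  by case: n {IH} => [|n]; rewrite ?mul0r // mulr_ge0 // -natr1 addrK.
have y3 : 0 <= n%:R * (n%:R - 1 : R) * y ^+ 3 by rewrite mulr_ge0 ?exprn_ge0.
have -> : 2 * (1 + y) ^+ n.+1 = (1 + y) * (2 * (1 + y) ^+ n) by rewrite exprS; ring.
apply: le_trans (ler_wpM2l (addr_ge0 ler01 y0) IH); rewrite -[n.+1%:R]natr1 -subr_ge0.
by rewrite (_ : _ - _ = n%:R * (n%:R - 1) * y ^+ 3) // !exprS expr0; ring.
Qed.

Lemma pow_mul_sq_le4 (M : R) N : (2 <= N)%N -> 0 <= M <= N%:R ->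
  (1 - M / N%:R) ^+ N * (M + 2) ^+ 2 <= 4.
Proof.
move=> N2 /andP[M0 MN].
have N2R : (2 : R) <= N%:R by rewrite ler_nat.
have y0 : 0 <= M / N%:R by rewrite divr_ge0.
have y1 : M / N%:R <= 1 by rewrite ler_pdivrMr ?mul1r //; lra.
have NyM : N%:R * (M / N%:R) = M by rewrite mulrC divfK // gt_eqF //; lra.
have sq : (M + 2) ^+ 2 <= 4 * (1 + M / N%:R) ^+ N.
  have := bernoulli2 N y0; rewrite -mulrA NyM.
  suff : M ^+ 2 <= 2 * (N%:R * (N%:R - 1) * (M / N%:R) ^+ 2) by rewrite !expr2; lra.
  rewrite -{1}NyM -subr_ge0 (_ : _ - _ = N%:R * (N%:R - 2) * (M / N%:R) ^+ 2).
    by rewrite !mulr_ge0 ?exprn_ge0 //; lra.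
  by rewrite !expr2; ring.
have : (1 - M / N%:R) ^+ N * (1 + M / N%:R) ^+ N <= 1.
  by rewrite -exprMn exprn_ile1 //; nra.
have q0 : 0 <= (1 - M / N%:R) ^+ N by rewrite exprn_ge0 // subr_ge0.
have := ler_wpM2l q0 sq; rewrite mulrCA; lra.
Qed.

Definition rD_lb (n M : R) := (n - M) * (M + 4) / (M + 2) ^+ 2.

Lemma rD_lb_le_rD N K (M : R) : (2 <= N)%N -> (N <= K)%N -> 1 <= M <= N%:R ->
  rD_lb N%:R M <= rD M N K.
Proof.
move=> N2 NK /andP[M1 MN]; rewrite /rD (minn_idPl NK).
have q4 : (1 - M / N%:R) ^+ N * (M + 2) ^+ 2 <= 4.
  by apply: pow_mul_sq_le4; rewrite // MN andbT; lra.
set q := (1 - M / N%:R) ^+ N in q4 *.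
have M2 : M + 2 != 0 by rewrite gt_eqF //; lra.
rewrite -subr_ge0 (_ : _ - _ = (N%:R - M) / (M * (M + 2) ^+ 2) * (4 - q * (M + 2) ^+ 2)).
  by rewrite mulr_ge0 ?subr_ge0 // divr_ge0 ?subr_ge0 // mulr_ge0 ?exprn_ge0 //; lra.
by rewrite /rD_lb; field; rewrite M2 gt_eqF //; lra.
Qed.

(* The constant is attained at M = 2, where the two hypotheses on Y coincide. *)
Lemma le_8_3_rD_lb (n M Y : R) : 1 <= M <= n ->
  Y <= n - M -> Y * (M - 1) <= n - M -> Y <= 8 / 3 * rD_lb n M.
Proof.
move=> /andP[M1 Mn] Y1 Y2.
have M2 : M + 2 != 0 by rewrite gt_eqF //; lra.
have [le_M2|lt2M] := leP M 2.
  apply: le_trans Y1 _; rewrite -subr_ge0.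
  rewrite (_ : _ - _ = (n - M) * (2 - M) * (3 * M + 10) / (3 * (M + 2) ^+ 2)).
    by rewrite divr_ge0 ?mulr_ge0 ?exprn_ge0 //; lra.
  by rewrite /rD_lb; field.
have M1p : 0 < M - 1 by lra.
apply: le_trans (_ : (n - M) / (M - 1) <= _); first by rewrite ler_pdivlMr.
rewrite -subr_ge0.
rewrite (_ : _ - _ = (n - M) * (M - 2) * (5 * M + 22) / (3 * (M + 2) ^+ 2 * (M - 1))).
  by rewrite divr_ge0 ?mulr_ge0 ?exprn_ge0 //; lra.
by rewrite /rD_lb; field; rewrite M2 gt_eqF.
Qed.

Lemma RF_chord_le_sub N K s (l M : R) : (0 < N)%N -> (N <= K)%N -> (s < K)%N ->
  0 <= l <= 1 -> M = 1 + (s%:R + l) * (N%:R - 1) / K%:R ->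
  (1 - l) * Rval (N - 1) K s + l * Rval (N - 1) K s.+1 <= N%:R - M.
Proof.
move=> N0 NK sK l01 ->.
have K0 : (0 < K)%N by lia.
have N1K : (N - 1 <= K)%N by lia.
apply: le_trans (ler_convex_comb l01 (Rval_le_linear _ K0 N1K (ltnW sK))
                                    (Rval_le_linear _ K0 N1K sK)) _.
rewrite natrB // -natr1 -subr_ge0 (_ : _ - _ = 0) //.
by field; rewrite pnatr_eq0 -lt0n.
Qed.

Lemma RF_chord_mul_le_sub N K s (l M : R) : (0 < N)%N -> (s < K)%N ->
  0 <= l <= 1 -> M = 1 + (s%:R + l) * (N%:R - 1) / K%:R ->
  ((1 - l) * Rval (N - 1) K s + l * Rval (N - 1) K s.+1) * (M - 1) <= N%:R - M.
Proof.
move=> N0 sK l01 HM; have /andP[l0 l1] := l01.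
have kp : (0 : R) < K%:R by rewrite ltr0n; lia.
have n1 : (0 : R) <= N%:R - 1 by rewrite subr_ge0 ler1n.
have sK' : s%:R + 1 <= K%:R :> R by rewrite natr1 ler_nat.
have s0 := ler0n R s.
have M1 : 0 <= M - 1 by rewrite HM addrC addKr divr_ge0 ?mulr_ge0; lra.
have ratio : (1 - l) * Rval (N - 1) K s + l * Rval (N - 1) K s.+1
    <= (K%:R - s%:R - l) / (s%:R + 1).
  apply: le_trans (ler_convex_comb l01 (Rval_le_ratio _ _ (ltnW sK))
                                       (Rval_le_ratio _ _ sK)) _.
  rewrite -natr1 -subr_ge0.
  rewrite (_ : _ - _ = l * (K%:R - s%:R - 1) / ((s%:R + 1) * (s%:R + 1 + 1))).
    by rewrite divr_ge0 ?mulr_ge0 //; lra.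
  by field; rewrite !gt_eqF //; lra.
apply: le_trans (ler_wpM2r M1 ratio) _; rewrite -subr_ge0.
rewrite (_ : _ - _ = (K%:R - s%:R - l) * (N%:R - 1) * (1 - l) / (K%:R * (s%:R + 1))).
  by rewrite divr_ge0 ?mulr_ge0 //; lra.
by rewrite HM; field; rewrite !gt_eqF //; lra.
Qed.

Lemma RF_le_e_rD N K (M : R) : (2 <= N)%N -> (N <= K)%N -> 1 <= M <= N%:R ->
  RF N K M <= expR 1 * rD M N K.
Proof.
move=> N2 NK HM; have /andP[M1 MN] := HM.
have N0 : (0 < N)%N by lia.
have K0 : (0 < K)%N by lia.
have [s [l [sK l01 Ml RF_le]]] := RF_le_chord N2 K0 HM.
have Y_le := le_8_3_rD_lb HM (RF_chord_le_sub N0 NK sK l01 Ml)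
                            (RF_chord_mul_le_sub N0 sK l01 Ml).
apply: le_trans RF_le (le_trans Y_le _).
apply: ler_pM; rewrite ?expR1_ge_8_3 ?rD_lb_le_rD //.
by rewrite /rD_lb divr_ge0 ?exprn_ge0 ?mulr_ge0 //; lra.
Qed.
End RDBound.

Section RCBound.
Variable R : realType.

(* The line through (t, (k-t)/(t+1)) and (t+1, (k-t-1)/(t+2)). *)
Definition secant (k t u : R) :=
  (k - t) / (t + 1) - (u - t) * (k + 1) / ((t + 1) * (t + 2)).

Lemma natr_consec_mul_ge0 (i t : nat) : 0 <= (i%:R - t%:R) * (i%:R - t%:R - 1) :> R.
Proof.
have [it|ti] := leqP i t.
  have : (i%:R : R) <= t%:R by rewrite ler_nat.
  by move=> h; rewrite mulr_le0 //; lra.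
have : (t%:R + 1 : R) <= i%:R by rewrite natr1 ler_nat.
by move=> h; rewrite mulr_ge0 //; lra.
Qed.

Lemma rC_ge_secant N K t (M : R) : (0 < K)%N -> (K <= N)%N -> 0 <= M <= N%:R ->
  secant K%:R t%:R (M * K%:R / N%:R) <= rC M N K.
Proof.
move=> K0 KN /andP[M0 MN].
have kp : (0 : R) < K%:R by rewrite ltr0n.
have np : (0 : R) < N%:R by rewrite ltr0n; lia.
have t0 := ler0n R t.
pose s : seq (R * R) := [seq (i%:R * N%:R / K%:R, Rval N K i) | i <- iota 0 K.+1].
have size_s : size s = K.+1 by rewrite size_map size_iota.
have nth_s i : (i <= K)%N -> nth (0, 0) s i = (i%:R * N%:R / K%:R, Rval N K i).
  by move=> iK; rewrite (nth_map 0%N) ?size_iota // nth_iota.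
pose al : R := - (K%:R / N%:R) * (K%:R + 1) / ((t%:R + 1) * (t%:R + 2)).
rewrite (_ : secant _ _ _ = al * M + secant K%:R t%:R 0); last first.
  by rewrite /al /secant; field; rewrite !gt_eqF //; lra.
apply: (@lce_ge_affine _ s 0 K (M / N%:R)); rewrite ?size_s //.
- by rewrite divr_ge0 ?ler_pdivrMr ?mul1r //=; lra.
- by rewrite !nth_s //= !mul0r mulr0 add0r; field; rewrite !gt_eqF.
move=> i; rewrite ltnS => iK; rewrite nth_s //= Rval_full //.
rewrite -subr_ge0 (_ : _ - _ = (K%:R + 1) * ((i%:R - t%:R) * (i%:R - t%:R - 1))
                               / ((i%:R + 1) * (t%:R + 1) * (t%:R + 2))).
  have := ler0n R i.
  by rewrite divr_ge0 ?(mulr_ge0 _ (natr_consec_mul_ge0 _ _)) ?mulr_ge0 //; lra.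
by rewrite /al /secant; field; rewrite !gt_eqF //; lra.
Qed.

Lemma le_2rC_of_secant N K t (P : R -> R) a b M : (0 < K)%N -> (K <= N)%N ->
  0 <= M <= N%:R -> a <= M <= b -> affine P ->
  P a <= 2 * secant K%:R t%:R (a * K%:R / N%:R) ->
  P b <= 2 * secant K%:R t%:R (b * K%:R / N%:R) ->
  P M <= 2 * rC M N K.
Proof.
move=> K0 KN M0N abM affP Pa Pb.
apply: le_trans (ler_wpM2l _ (rC_ge_secant t K0 KN M0N)) => //.
rewrite -subr_ge0; apply: (@affine_ge0_between _
  (fun y => 2 * secant K%:R t%:R (y * K%:R / N%:R) - P y) a b); rewrite ?subr_ge0 //.
by move=> x y u; rewrite /= affP /secant; ring.
Qed.

Lemma RF_le_2rC_first_segment K (M : R) : (3 <= K)%N -> 1 <= M <= 2 ->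
  RF K.+1 K M <= 2 * rC M K.+1 K.
Proof.
move=> K3 /andP[M1 M2].
have k3 : (3 : R) <= K%:R by rewrite ler_nat.
have K0 : (0 < K)%N by lia.
have M0N : 0 <= M <= K.+1%:R by rewrite -natr1; apply/andP; split; lra.
pose P (y : R) := (1 - y / 2) * (K%:R + 1) + y / 2 * ((K%:R - 1) / 2).
have affP : affine P by move=> x y u; rewrite /P; ring.
have RF_le : RF K.+1 K M <= P M.
  have := @lce_le_chord R (RF_points R K.+1 K) 0 2 (M / 2) M.
  rewrite size_RF_points nth_RF_points // Rval_full ?subSS ?subn0 //= /P -[K.+1%:R]natr1.
  apply=> //; first by apply/andP; split; lra.
  by field; rewrite gt_eqF //; lra.
apply: le_trans RF_le _.
pose c : R := (K%:R + 1) / K%:R.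
have Pc (t : nat) : (t <= 1)%N -> P c <= 2 * secant K%:R t%:R (c * K%:R / K.+1%:R).
  move=> t1; rewrite -subr_ge0 (_ : _ - _ = (K%:R - 1) * (K%:R - 3) / (4 * K%:R)).
    by rewrite divr_ge0 ?mulr_ge0; lra.
  case: t t1 => [|[]] // _;
    by rewrite /P /c /secant -[K.+1%:R]natr1; field; rewrite !gt_eqF //; lra.
have [Mc|cM] := leP M c.
  apply: (le_2rC_of_secant (t := 0) K0 (leqnSn K) M0N (_ : 1 <= M <= c) affP).
  - by rewrite M1.
  - rewrite -subr_ge0 (_ : _ - _ = (K%:R - 1) / 4); first lra.
    by rewrite /P /secant -[K.+1%:R]natr1; field; rewrite !gt_eqF //; lra.
  - exact: Pc.
apply: (le_2rC_of_secant (t := 1) K0 (leqnSn K) M0N (_ : c <= M <= 2) affP).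
- by rewrite M2 ltW.
- exact: Pc.
rewrite -subr_ge0 (_ : _ - _ = (K%:R - 1) / 6); first lra.
by rewrite /P /secant -[K.+1%:R]natr1; field; rewrite !gt_eqF //; lra.
Qed.

Lemma secant_le_2rC N K s (l M : R) : (K < N)%N -> (s < K)%N ->
  (0 < s)%N || (K.+2 <= N)%N -> 0 <= l <= 1 ->
  M = 1 + (s%:R + l) * (N%:R - 1) / K%:R ->
  secant K%:R s%:R (s%:R + l) <= 2 * rC M N K.
Proof.
move=> KN sK sN /andP[l0 l1] HM.
have K0 : (0 < K)%N by lia.
have kp : (0 : R) < K%:R by rewrite ltr0n.
have kn : (K%:R + 1 : R) <= N%:R by rewrite natr1 ler_nat.
have n1 : (0 : R) < N%:R - 1 by lra.
have sk : (s%:R + 1 : R) <= K%:R by rewrite natr1 ler_nat.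
have s0 := ler0n R s.
have M0N : 0 <= M <= N%:R.
  rewrite HM; apply/andP; split; first by rewrite addr_ge0 ?divr_ge0 ?mulr_ge0 //; lra.
  rewrite -lerBrDl ler_pdivrMr // mulrC ler_wpM2l //; lra.
pose P (y : R) := secant K%:R s%:R ((y - 1) * K%:R / (N%:R - 1)).
have affP : affine P by move=> x y u; rewrite /P /secant; ring.
rewrite (_ : s%:R + l = (M - 1) * K%:R / (N%:R - 1)); last first.
  by rewrite HM; field; rewrite !gt_eqF //; lra.
pose x (t : R) := 1 + t * (N%:R - 1) / K%:R.
pose c : R := (s%:R + 1) * N%:R / K%:R.
have Pc (t : nat) : (s <= t <= s.+1)%N ->
    P c <= 2 * secant K%:R t%:R (c * K%:R / N%:R).
  have mid : 0 <= (N%:R - 1) * (s%:R + 1) - (K%:R + 1) :> R.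
    case/orP: sN => [s1|N2].
      have Ks : 1 <= K%:R * s%:R :> R by rewrite -natrM ler1n muln_gt0 K0.
      have : 0 <= (N%:R - 1 - K%:R) * (s%:R + 1) :> R by apply: mulr_ge0; lra.
      lra.
    have : (K%:R + 2 : R) <= N%:R by rewrite -[2]/(1 + 1) addrA !natr1 ler_nat.
    nra.
  move=> st; rewrite -subr_ge0 (_ : _ - _ = (K%:R - s%:R - 1)
      * ((N%:R - 1) * (s%:R + 1) - (K%:R + 1)) / ((s%:R + 2) * (N%:R - 1) * (s%:R + 1))).
    by rewrite divr_ge0 ?mulr_ge0 //; lra.
  have [->|->] : t = s \/ t = s.+1 by lia.
    by rewrite /P /c /secant; field; rewrite !gt_eqF //; lra.
  by rewrite /P /c /secant -natr1; field; rewrite !gt_eqF //; lra.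
have [Mc|cM] := leP M c.
  apply: (le_2rC_of_secant (t := s) K0 (ltnW KN) M0N (_ : x s%:R <= M <= c) affP).
  - by rewrite Mc HM /x lerD2l andbT !ler_pM2r ?invr_gt0 //; lra.
  - rewrite -subr_ge0 (_ : _ - _ = (K%:R - s%:R)
        * (N%:R * (s%:R + 2) - 2 * (K%:R + 1)) / (N%:R * (s%:R + 1) * (s%:R + 2))).
      by rewrite divr_ge0 ?mulr_ge0 //; nra.
    by rewrite /P /x /secant; field; rewrite !gt_eqF //; lra.
  - by apply: Pc; rewrite leqnn leqnSn.
apply: (le_2rC_of_secant (t := s.+1) K0 (ltnW KN) M0N (_ : c <= M <= x (s%:R + 1)) affP).
- by rewrite (ltW cM) HM /x lerD2l !ler_pM2r ?invr_gt0 //; lra.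
- by apply: Pc; rewrite leqnSn leqnn.
rewrite -subr_ge0 (_ : _ - _ = (K%:R - s%:R - 1)
    * (N%:R * (s%:R + 3) - 2 * (K%:R + 1)) / (N%:R * (s%:R + 2) * (s%:R + 3))).
  by rewrite divr_ge0 ?mulr_ge0 //; nra.
by rewrite /P /x /secant -natr1; field; rewrite !gt_eqF //; lra.
Qed.

Lemma RF_le_2rC N K (M : R) : (2 <= K)%N -> (K < N)%N -> (N, K) <> (3%N, 2%N) ->
  1 <= M <= N%:R -> RF N K M <= 2 * rC M N K.
Proof.
move=> K2 KN NK32 HM.
have N2 : (2 <= N)%N by lia.
have K0 : (0 < K)%N by lia.
have [s [l [sK l01 Ml RF_le]]] := RF_le_chord N2 K0 HM.
have [[s0 NK1]|sN] : (s = 0 /\ N = K.+1)%N \/ ((0 < s) || (K.+2 <= N))%N by lia.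
  subst s N; apply: RF_le_2rC_first_segment.
    by case: (K =P 2%N) NK32 => [-> //|/eqP]; lia.
  have -> : M = 1 + l by rewrite Ml -natr1; field; rewrite gt_eqF ?ltr0n.
  by case/andP: l01 => l0 l1; apply/andP; split; lra.
apply: le_trans RF_le _; rewrite !Rval_full //; try lia.
rewrite (_ : _ + _ = secant K%:R s%:R (s%:R + l)); first exact: secant_le_2rC.
by rewrite /secant -natr1; field; rewrite !gt_eqF //; have := ler0n R s; lra.
Qed.

End RCBound.

Theorem lemma5 (R : realType) (N K : nat) :
  (2 <= N)%N -> (2 <= K)%N ->
  ((K < N)%N -> (N, K) <> (3%N, 2%N) ->
     forall M : R, 1 <= M <= N%:R -> RF N K M <= 2 * rC M N K) /\
  ((N <= K)%N ->
     forall M : R, 1 <= M <= N%:R -> RF N K M <= expR 1 * rD M N K).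
Proof.
move=> N2 K2; split => [KN NK32 M|NK M]; first exact: RF_le_2rC.
exact: RF_le_e_rD.
Qed.
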